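(* Assume (A1)–(A2) below. There is a constant $\hat C_1>0$ depending only on the bounds in (A1)–(A2) such that for every $\varepsilon\in[0,\bar\varepsilon]$, $\gamma\in[\underline\gamma,\bar\gamma]$ and all $(\rho,w),(\hat\rho,\hat w)\in L^2(0,\ell)^2$ with $\underline\rho\le\rho,\hat\rho\le\bar\rho$, $-\bar w\le w,\hat w\le\bar w$ a.e., $$-\int_0^\ell\gamma\,(|w|w-|\hat w|\hat w)\,a\,(\rho w-\hat\rho\hat w)\,dx\le\hat C_1\mathcal{H}_\varepsilon(\boldsymbol u|\hat{\boldsymbol u})-2\mathcal{D}(\boldsymbol u|\hat{\boldsymbol u}),$$ where $\boldsymbol u=(\rho,w)$, $\hat{\boldsymbol u}=(\hat\rho,\hat w)$ and $\mathcal{D}(\boldsymbol u|\hat{\boldsymbol u})=\frac1{16}\int_0^\ell\gamma a\hat\rho(|w|+|\hat w|)(w-\hat w)^2\,dx$.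
   Context: Fix $\ell>0$, $a:[0,\ell]\to\mathbb{R}$, a constant $g$, $z:[0,\ell]\to\mathbb{R}$, smooth strictly convex $P:(0,\infty)\to\mathbb{R}$. (A1): positive constants $\underline\rho\le\bar\rho$, $\bar w$, $\bar\varepsilon$ with $\rho P''(\rho)\ge4\bar\varepsilon^2\bar w^2$ for $\underline\rho\le\rho\le\bar\rho$; $0<\underline a\le a\le\bar a$; $|gz|\le\bar g\bar z$. (A2): $0\le\varepsilon\le\bar\varepsilon$, $0<\underline\gamma\le\gamma\le\bar\gamma$, states satisfy $\underline\rho\le\rho\le\bar\rho$, $-\bar w\le w\le\bar w$. Relative energy: $\mathcal{H}_\varepsilon(\boldsymbol u|\hat{\boldsymbol u})=\mathcal{H}_\varepsilon(\boldsymbol u)-\mathcal{H}_\varepsilon(\hat{\boldsymbol u})-\int_0^\ell a[(\varepsilon^2\hat w^2/2+P'(\hat\rho)+gz)(\rho-\hat\rho)+\varepsilon^2\hat\rho\hat w(w-\hat w)]dx$ with $\mathcal{H}_\varepsilon(\rho,w)=\int_0^\ell a(\varepsilon^2\rho w^2/2+P(\rho)+gz\rho)dx$. *)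

From HB Require Import structures.
From mathcomp Require Import all_boot all_order all_algebra.
From mathcomp Require Import all_classical all_reals all_analysis.
Set Implicit Arguments. Unset Strict Implicit. Unset Printing Implicit Defensive.
Import Order.TTheory GRing.Theory Num.Theory.
Import numFieldNormedType.Exports.
Local Open Scope classical_set_scope.
Local Open Scope ring_scope.

Section Defs.
Variable R : realType.

Definition int0l (l : R) (f : R -> R) : R :=
  Rintegral (@lebesgue_measure R) `[0, l] f.

Definition smooth_pos (P : R -> R) : Prop :=
  forall (n : nat) (x : R), 0 < x -> derivable (iter n (@derive1 R R) P) x 1.

Definition strictly_convex_pos (P : R -> R) : Prop :=
  forall x y t : R, 0 < x -> 0 < y -> x != y -> 0 < t < 1 ->
    P (t * x + (1 - t) * y) < t * P x + (1 - t) * P y.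

Definition Henergy (l : R) (a : R -> R) (g : R) (z : R -> R) (P : R -> R)
  (eps : R) (rho w : R -> R) : R :=
  int0l l (fun x => a x * (eps ^+ 2 * rho x * w x ^+ 2 / 2 + P (rho x)
                           + g * z x * rho x)).

Definition Hrel (l : R) (a : R -> R) (g : R) (z : R -> R) (P : R -> R)
  (eps : R) (rho w rhoh wh : R -> R) : R :=
  Henergy l a g z P eps rho w - Henergy l a g z P eps rhoh wh
  - int0l l (fun x => a x *
      ((eps ^+ 2 * wh x ^+ 2 / 2 + derive1 P (rhoh x) + g * z x)
         * (rho x - rhoh x)
       + eps ^+ 2 * rhoh x * wh x * (w x - wh x))).

Definition Drel (l : R) (a : R -> R) (gamma : R) (rho w rhoh wh : R -> R) : R :=
  16^-1 * int0l l (fun x => gamma * a x * rhoh x * (`|w x| + `|wh x|)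
                            * (w x - wh x) ^+ 2).

End Defs.

(* The relative energy density is the Bregman divergence of
   E(rho, w) = eps^2 rho w^2 / 2 + P(rho) between (rhoh, wh) and (rho, w).
   Completing the square, rho times the Hessian form of E at (dr, dw) is at
   least (rho P''(rho) - eps^2 w^2) dr^2 >= 3 c dr^2 with c = eps_hi^2 w_hi^2,
   by (A1); Taylor's formula along the segment then bounds the density below
   by (c / rho_hi) (rho - rhoh)^2.
   In the friction term write rho w - rhoh wh = rhoh (w - wh) + w (rho - rhoh).
   As (|w| w - |wh| wh) (w - wh) >= (|w| + |wh|) (w - wh)^2 / 2, the first part
   yields the dissipation; the second, by the Lipschitz bound on x |-> |x| x
   and Young's inequality, costs at most half of it plus a multiple of
   (rho - rhoh)^2, which the relative energy absorbs. *)

From mathcomp Require Import all_boot all_order all_algebra.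
From mathcomp Require Import all_classical all_reals all_analysis.
From mathcomp Require Import measurable_realfun.
From mathcomp Require Import ring lra.
Set Implicit Arguments.
Unset Strict Implicit.
Unset Printing Implicit Defensive.

Import Order.TTheory GRing.Theory Num.Theory.
Import numFieldNormedType.Exports.
Local Open Scope classical_set_scope.
Local Open Scope ring_scope.

Section real_field_inequalities.
Context {R : realFieldType}.

Lemma norm_mul_self_lipschitz (x y : R) :
  `| `|x| * x - `|y| * y | <= (`|x| + `|y|) * `|x - y|.
Proof.
case: (lerP 0 x) => hx; case: (lerP 0 y) => hy; case: (lerP 0 (x - y)) => hxy;
  rewrite ?(ger0_norm hx) ?(ltr0_norm hx) ?(ger0_norm hy) ?(ltr0_norm hy)
    ?(ger0_norm hxy) ?(ltr0_norm hxy) ler_norml; apply/andP; split; nra.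
Qed.

Lemma norm_mul_self_monotone (x y : R) :
  (`|x| + `|y|) * (x - y) ^+ 2 / 2 <= (`|x| * x - `|y| * y) * (x - y).
Proof.
have := sqr_ge0 (x - y); have := sqr_ge0 (x + y).
case: (lerP 0 x) => hx; case: (lerP 0 y) => hy;
  rewrite ?(ger0_norm hx) ?(ltr0_norm hx) ?(ger0_norm hy) ?(ltr0_norm hy); nra.
Qed.

Lemma lerp_itv (a b x y t : R) : 0 <= t <= 1 -> a <= x <= b -> a <= y <= b ->
  a <= x + t * (y - x) <= b.
Proof. move=> /andP[? ?] /andP[? ?] /andP[? ?]; apply/andP; split; nra. Qed.

Lemma energy_hessian_ge (p2 eps s v hi c dr dw : R) :
  0 < s <= hi -> eps ^+ 2 * v ^+ 2 <= c -> 4 * c <= s * p2 ->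
  2 * (c / hi * dr ^+ 2) <= p2 * dr ^+ 2 + 2 * eps ^+ 2 * v * dr * dw + eps ^+ 2 * s * dw ^+ 2.
Proof.
move=> /andP[s0 shi] hc hp2; set H := p2 * _ + _ + _.
have sH : 3 * c * dr ^+ 2 <= s * H.
  have -> : s * H = s * p2 * dr ^+ 2 + eps ^+ 2 * (s * dw + v * dr) ^+ 2
                    - eps ^+ 2 * v ^+ 2 * dr ^+ 2 by rewrite /H; ring.
  have h1 := ler_wpM2r (sqr_ge0 dr) hp2.
  have h2 := ler_wpM2r (sqr_ge0 dr) hc.
  have h3 := mulr_ge0 (sqr_ge0 eps) (sqr_ge0 (s * dw + v * dr)).
  lra.
have cdr0 : 0 <= c * dr ^+ 2.
  have c0 : 0 <= c by apply: le_trans hc; rewrite mulr_ge0 ?sqr_ge0.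
  by rewrite mulr_ge0 ?sqr_ge0.
have H0 : 0 <= H by nra.
have hi0 : 0 < hi by exact: lt_le_trans s0 shi.
have -> : 2 * (c / hi * dr ^+ 2) = 2 * c * dr ^+ 2 / hi by ring.
rewrite ler_pdivrMr //; nra.
Qed.

Lemma friction_flux_le (lo wb r rh w wh : R) :
  0 < lo <= rh -> `|w| <= wb -> `|wh| <= wb ->
  - ((`|w| * w - `|wh| * wh) * (r * w - rh * wh)) <=
  2 * wb ^+ 3 / lo * (r - rh) ^+ 2 - 8^-1 * (rh * (`|w| + `|wh|) * (w - wh) ^+ 2).
Proof.
move=> /andP[lo0 lorh] hw hwh.
have mono := norm_mul_self_monotone w wh; have lip := norm_mul_self_lipschitz w wh.
set A := `|w| * w - `|wh| * wh in mono lip *; set S := `|w| + `|wh| in mono lip *.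
set dw := w - wh in mono lip *; set dr := r - rh.
have S0 : 0 <= S by rewrite addr_ge0.
have S2 : S <= 2 * wb by rewrite /S; lra.
set K := wb ^+ 2 / lo.
have loK : lo * K = wb ^+ 2 by rewrite /K mulrC divfK ?gt_eqF.
have K0 : 0 <= K by rewrite /K divr_ge0 ?sqr_ge0 ?ltW.
have cross : - (w * A * dr) <= wb * S * (`|dw| * `|dr|).
  apply: ler_normlW; rewrite normrN !normrM -mulrA.
  have -> : wb * S * (`|dw| * `|dr|) = wb * (S * `|dw| * `|dr|) by ring.
  by apply: ler_pM; rewrite ?mulr_ge0 // ler_wpM2r.
have young : wb * (`|dw| * `|dr|) <= rh * dw ^+ 2 / 4 + K * dr ^+ 2.
  have := sqr_ge0 (lo * `|dw| / 2 - wb * `|dr|).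
  have := ler_wpM2r (sqr_ge0 dw) lorh.
  rewrite -(real_normK (num_real dw)) -(real_normK (num_real dr)); nra.
have absorb : S * (K * dr ^+ 2) <= 2 * wb ^+ 3 / lo * dr ^+ 2.
  have -> : 2 * wb ^+ 3 / lo * dr ^+ 2 = 2 * wb * (K * dr ^+ 2) by rewrite /K; ring.
  by apply: ler_wpM2r; [rewrite mulr_ge0 ?sqr_ge0|exact: S2].
have -> : - (A * (r * w - rh * wh)) = - (rh * (A * dw)) - w * A * dr by rewrite /dw /dr; ring.
have := ler_wpM2l (ltW (lt_le_trans lo0 lorh)) mono.
have := ler_wpM2l S0 young.
have := mulr_ge0 (mulr_ge0 (ltW (lt_le_trans lo0 lorh)) S0) (sqr_ge0 dw).
nra.
Qed.

End real_field_inequalities.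

Section relative_energy.
Context {R : realType}.
Implicit Types f df : R -> R.

Lemma is_derive_ge0_le f df (a b : R) : a <= b ->
  {in `[a, b], forall x : R, is_derive x 1 f (df x)} ->
  {in `[a, b], forall x : R, 0 <= df x} -> f a <= f b.
Proof.
move=> ab fdf df0.
apply: (@ger0_derive1_ndecr _ f a b) => //.
- by move=> x /subset_itv_oo_cc/fdf [].
- move=> x /subset_itv_oo_cc x_ab; rewrite derive1E.
  by have [_ ->] := fdf _ x_ab; apply: df0.
- by apply: derivable_within_continuous => x /fdf [].
Qed.

Lemma taylor_lower_bound (f f1 f2 : R -> R) (a b m : R) : a <= b ->
  {in `[a, b], forall x : R, is_derive x 1 f (f1 x)} ->
  {in `[a, b], forall x : R, is_derive x 1 f1 (f2 x)} ->
  {in `[a, b], forall x, 2 * m <= f2 x} ->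
  m * (b - a) ^+ 2 <= f b - f a - f1 a * (b - a).
Proof.
move=> ab ff1 f1f2 f2m.
have sub x : x \in `[a, b] -> {subset `[a, x] <= `[a, b]}.
  by rewrite in_itv /= => /andP[_ xb]; apply: subitvP; rewrite subitvE !bnd_simp.
have f1_ge x : x \in `[a, b] -> 0 <= f1 x - f1 a - 2 * m * (x - a).
  move=> xab; have xa : a <= x by move: xab; rewrite in_itv /= => /andP[].
  have := @is_derive_ge0_le (fun y => f1 y - f1 a - 2 * m * (y - a))
    (fun y => f2 y - 2 * m) a x xa.
  rewrite /= !subrr mulr0 subr0; apply=> y /(sub _ xab) yab.
  - by have := f1f2 _ yab => ?; apply: is_derive_eq; rewrite /GRing.scale /=; ring.
  - by rewrite subr_ge0 f2m.
rewrite -subr_ge0.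
have := @is_derive_ge0_le (fun y => f y - f a - f1 a * (y - a) - m * (y - a) ^+ 2)
  (fun y => f1 y - f1 a - 2 * m * (y - a)) a b ab.
rewrite /= !subrr mulr0 expr0n /= mulr0 !subr0; apply=> y yab.
- by have := ff1 _ yab => ?; apply: is_derive_eq; rewrite /GRing.scale /=; ring.
- exact: f1_ge.
Qed.

Definition energy_density (P : R -> R) (eps r w : R) : R :=
  eps ^+ 2 * r * w ^+ 2 / 2 + P r.

Definition rel_energy_density (P : R -> R) (eps r w rh wh : R) : R :=
  energy_density P eps r w - energy_density P eps rh wh
  - ((eps ^+ 2 * wh ^+ 2 / 2 + derive1 P rh) * (r - rh) + eps ^+ 2 * rh * wh * (w - wh)).

Lemma rel_energy_density_ge (P : R -> R) (lo hi c eps wb r w rh wh : R) :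
  0 < lo ->
  (forall s, lo <= s <= hi -> derivable P s 1) ->
  (forall s, lo <= s <= hi -> derivable (derive1 P) s 1) ->
  (forall s, lo <= s <= hi -> 4 * c <= s * derive1 (derive1 P) s) ->
  eps ^+ 2 * wb ^+ 2 <= c ->
  lo <= r <= hi -> lo <= rh <= hi -> - wb <= w <= wb -> - wb <= wh <= wb ->
  c / hi * (r - rh) ^+ 2 <= rel_energy_density P eps r w rh wh.
Proof.
move=> lo0 dP dP1 hP2 hc hr hrh hw hwh; set dr := r - rh; set dw := w - wh.
have seg t : t \in `[0, 1] -> lo <= rh + t * dr <= hi /\ - wb <= wh + t * dw <= wb.
  by rewrite in_itv /= => t01; split; apply: lerp_itv.
pose F (t : R) : R := energy_density P eps (rh + t * dr) (wh + t * dw).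
pose F1 (t : R) : R := derive1 P (rh + t * dr) * dr
  + eps ^+ 2 * (dr * (wh + t * dw) ^+ 2 / 2 + (rh + t * dr) * (wh + t * dw) * dw).
pose F2 (t : R) : R := derive1 (derive1 P) (rh + t * dr) * dr ^+ 2
  + 2 * eps ^+ 2 * (wh + t * dw) * dr * dw + eps ^+ 2 * (rh + t * dr) * dw ^+ 2.
have -> : rel_energy_density P eps r w rh wh = F 1 - F 0 - F1 0.
  rewrite /F /F1 !mul0r !addr0 !mul1r !subrKC /rel_energy_density /dr /dw; ring.
have := @taylor_lower_bound F F1 F2 0 1 (c / hi * dr ^+ 2) ler01.
rewrite subr0 expr1n !mulr1; apply=> t /seg[rt /andP[vlo vhi]].
- have /derivableP := dP _ rt; rewrite -derive1E => ?.
  by rewrite /F /energy_density; apply: is_derive_eq; rewrite /F1 /GRing.scale /= /dr /dw; field.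
- have /derivableP := dP1 _ rt; rewrite -derive1E => ?.
  by rewrite /F1; apply: is_derive_eq; rewrite /F2 /GRing.scale /= /dr /dw; field.
- apply: energy_hessian_ge; last exact: hP2.
  + by case/andP: rt => lort ->; rewrite (lt_le_trans lo0 lort).
  + by apply: le_trans hc; apply: ler_wpM2l; [exact: sqr_ge0|nra].
Qed.

Definition friction_constant (lo hi wb c gh : R) : R :=
  gh * (2 * wb ^+ 3 / lo) / (c / hi) + 1.

Lemma friction_constant_gt0 (lo hi wb c gh : R) :
  0 < lo -> 0 < hi -> 0 <= wb -> 0 < c -> 0 <= gh -> 0 < friction_constant lo hi wb c gh.
Proof.
move=> lo0 hi0 wb0 c0 gh0; rewrite /friction_constant ltr_wpDl //.
apply: divr_ge0; last by rewrite ltW ?divr_gt0.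
by apply: mulr_ge0 => //; apply: divr_ge0; [rewrite mulr_ge0 ?exprn_ge0 | exact: ltW].
Qed.

Lemma friction_le_rel_energy_dissipation (P : R -> R)
    (lo hi c wb gh eps gam a r w rh wh : R) :
  0 < lo -> 0 < c ->
  (forall s, lo <= s <= hi -> derivable P s 1) ->
  (forall s, lo <= s <= hi -> derivable (derive1 P) s 1) ->
  (forall s, lo <= s <= hi -> 4 * c <= s * derive1 (derive1 P) s) ->
  eps ^+ 2 * wb ^+ 2 <= c -> 0 <= gam <= gh -> 0 <= a ->
  lo <= r <= hi -> lo <= rh <= hi -> - wb <= w <= wb -> - wb <= wh <= wb ->
  - (gam * (`|w| * w - `|wh| * wh) * a * (r * w - rh * wh)) <=
  friction_constant lo hi wb c gh * (a * rel_energy_density P eps r w rh wh)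
  - 2 * 16^-1 * (gam * a * rh * (`|w| + `|wh|) * (w - wh) ^+ 2).
Proof.
move=> lo0 c0 dP dP1 hP2 hc /andP[gam0 gamh] a0 hr hrh hw hwh.
have hi0 : 0 < hi by case/andP: hr => lor rhi; rewrite (lt_le_trans lo0) // (le_trans lor).
have wb0 : 0 <= wb by case/andP: hw => *; lra.
have E := rel_energy_density_ge lo0 dP dP1 hP2 hc hr hrh hw hwh.
have F : - ((`|w| * w - `|wh| * wh) * (r * w - rh * wh)) <=
    2 * wb ^+ 3 / lo * (r - rh) ^+ 2 - 8^-1 * (rh * (`|w| + `|wh|) * (w - wh) ^+ 2).
  by apply: friction_flux_le; rewrite ?ler_norml // lo0; case/andP: hrh.
rewrite /friction_constant; set K := 2 * wb ^+ 3 / lo in F *; set k := c / hi in E *.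
set rho := rel_energy_density _ _ _ _ _ _ in E *; set dr2 := (r - rh) ^+ 2 in E F.
have k0 : 0 < k by rewrite divr_gt0.
have K0 : 0 <= K by apply: divr_ge0; [rewrite mulr_ge0 ?exprn_ge0 | exact: ltW].
have kdr20 : 0 <= k * dr2 by rewrite mulr_ge0 ?sqr_ge0 // ltW.
have arho0 : 0 <= a * rho by rewrite mulr_ge0 // (le_trans kdr20 E).
have drag := ler_wpM2l (mulr_ge0 gam0 a0) F.
have gam_gh : gam * a * (K * dr2) <= gh * a * (K * dr2).
  by apply: ler_wpM2r; [rewrite mulr_ge0 ?sqr_ge0 | exact: ler_wpM2r].
have rel : gh * a * (K * dr2) <= gh * K / k * (a * rho).
  have -> : gh * a * (K * dr2) = gh * K / k * (a * (k * dr2)) by field; rewrite gt_eqF.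
  apply: ler_wpM2l; last exact: ler_wpM2l.
  exact: divr_ge0 (mulr_ge0 (le_trans gam0 gamh) K0) (ltW k0).
have : gh * K / k * (a * rho) <= (gh * K / k + 1) * (a * rho).
  by apply: ler_wpM2r => //; rewrite lerDl.
have -> : 2 * 16^-1 = 8^-1 :> R by field.
lra.
Qed.

End relative_energy.

Definition bounded_measurable {d} {T : measurableType d} {R : realType}
    (D : set T) (f : T -> R) :=
  measurable_fun D f /\ exists M, forall x, D x -> `|f x| <= M.

Section bounded_measurable.
Context {d} {T : measurableType d} {R : realType} {D : set T}.
Implicit Types f g : T -> R.

Lemma bounded_measurable_cst (c : R) : bounded_measurable D (fun=> c).
Proof. by split; [exact: measurable_cst | exists `|c|]. Qed.

Lemma bounded_measurableD f g : bounded_measurable D f -> bounded_measurable D g ->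
  bounded_measurable D (fun x => f x + g x).
Proof.
move=> [mf [M fM]] [mg [N gN]]; split; first exact: measurable_funD.
by exists (M + N) => x Dx; rewrite (le_trans (ler_normD _ _)) ?lerD ?fM ?gN.
Qed.

Lemma bounded_measurableN f : bounded_measurable D f ->
  bounded_measurable D (fun x => - f x).
Proof.
by move=> [mf [M fM]]; split; [exact: measurable_funN | exists M => x /fM; rewrite normrN].
Qed.

Lemma bounded_measurableB f g : bounded_measurable D f -> bounded_measurable D g ->
  bounded_measurable D (fun x => f x - g x).
Proof. by move=> bf /bounded_measurableN; apply: bounded_measurableD. Qed.

Lemma bounded_measurableM f g : bounded_measurable D f -> bounded_measurable D g ->
  bounded_measurable D (fun x => f x * g x).
Proof.
move=> [mf [M fM]] [mg [N gN]]; split; first exact: measurable_funM.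
by exists (M * N) => x Dx; rewrite normrM ler_pM ?fM ?gN.
Qed.

Lemma bounded_measurableX f n : bounded_measurable D f ->
  bounded_measurable D (fun x => f x ^+ n).
Proof.
move=> bf; elim: n => [|n ihn]; first exact: bounded_measurable_cst.
by under [fun x => _]funext => x do rewrite exprS; apply: bounded_measurableM.
Qed.

Lemma bounded_measurable_normr f : bounded_measurable D f ->
  bounded_measurable D (fun x => `|f x|).
Proof.
move=> [mf [M fM]]; split; last by exists M => x /fM; rewrite normr_id.
by apply: measurableT_comp => //; exact: normr_measurable.
Qed.

Lemma bounded_measurable_itv f (lo hi : R) : measurable_fun D f ->
  (forall x, D x -> lo <= f x <= hi) -> bounded_measurable D f.
Proof.
move=> mf fD; split => //; exists (`|lo| + `|hi|) => x /fD /andP[lof fhi].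
have := lerNnormlW (lexx `|lo|); have := ler_norm hi; have := normr_ge0 lo.
have := normr_ge0 hi; rewrite ler_norml; move=> *; apply/andP; split; lra.
Qed.

Lemma bounded_measurable_comp_itv (P : R -> R) f (lo hi : R) : lo <= hi ->
  {within `[lo, hi], continuous P} -> measurable_fun D f ->
  (forall x, D x -> lo <= f x <= hi) -> bounded_measurable D (fun x => P (f x)).
Proof.
move=> lohi cP mf fD.
have [cmax _ Pmax] := EVT_max lohi cP; have [cmin _ Pmin] := EVT_min lohi cP.
apply: (bounded_measurable_itv (lo := P cmin) (hi := P cmax)) => [|x Dx].
  apply: (measurable_comp (measurable_itv `[lo, hi])) => //.
  - by move=> _ [x Dx <-]; rewrite /= in_itv /= fD.
  - exact: subspace_continuous_measurable_fun.
have fx : f x \in `[lo, hi] by rewrite in_itv /= fD.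
by rewrite Pmin ?Pmax.
Qed.

Hypothesis mD : measurable D.
Context {mu : {measure set T -> \bar R}}.
Hypothesis muD : (mu D < +oo)%E.

Lemma bounded_measurable_integrable f : bounded_measurable D f ->
  mu.-integrable D (EFin \o f).
Proof.
move=> [mf [M fM]]; apply: measurable_bounded_integrable => //.
exists M; split; first by rewrite num_real.
by move=> N MN x Dx; rewrite /= (le_trans (fM x Dx)) ?ltW.
Qed.

Lemma RintegralN f : mu.-integrable D (EFin \o f) ->
  \int[mu]_(x in D) - f x = - \int[mu]_(x in D) f x.
Proof.
move=> intf; rewrite -mulN1r -RintegralZl //.
by apply: eq_Rintegral => x _; rewrite mulN1r.
Qed.

Lemma le_Rintegral_lincomb f g h (a b : R) :
  bounded_measurable D f -> bounded_measurable D g -> bounded_measurable D h ->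
  (forall x, D x -> f x <= a * g x - b * h x) ->
  \int[mu]_(x in D) f x <= a * \int[mu]_(x in D) g x - b * \int[mu]_(x in D) h x.
Proof.
move=> bf bg bh fgh.
have bZ (c : R) (k : T -> R) :
    bounded_measurable D k -> bounded_measurable D (fun x => c * k x).
  by move=> bk; apply: bounded_measurableM => //; exact: bounded_measurable_cst.
have int k : bounded_measurable D k -> mu.-integrable D (EFin \o k).
  exact: bounded_measurable_integrable.
rewrite -RintegralZl ?int // -RintegralZl ?int // -RintegralB //; try exact/int/bZ.
by apply: le_Rintegral => //; [exact: int | apply: int; apply: bounded_measurableB; exact: bZ].
Qed.

End bounded_measurable.

#[local] Hint Resolve bounded_measurable_cst bounded_measurableD bounded_measurableB
  bounded_measurableM bounded_measurableN bounded_measurableX bounded_measurable_normr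
  bounded_measurable_integrable measurable_itv : core.

Section integrated_estimate.
Context {R : realType}.
Variables (rho_lo rho_hi w_hi eps_hi a_lo a_hi g_hi z_hi gam_lo gam_hi : R).
Variables (l g eps gam : R) (a z P rho w rhoh wh : R -> R).
Hypotheses (lo0 : 0 < rho_lo) (lohi : rho_lo <= rho_hi) (wb0 : 0 < w_hi) (eb0 : 0 < eps_hi).
Hypotheses (alo0 : 0 < a_lo) (glo0 : 0 < gam_lo) (l0 : 0 < l).
Hypothesis smP : smooth_pos P.
Hypothesis hP2 : forall r, rho_lo <= r <= rho_hi ->
  4 * eps_hi ^+ 2 * w_hi ^+ 2 <= r * derive1 (derive1 P) r.
Hypotheses (ma : measurable_fun `[0, l] a) (mz : measurable_fun `[0, l] z).
Hypotheses (mr : measurable_fun `[0, l] rho) (mw : measurable_fun `[0, l] w).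
Hypotheses (mrh : measurable_fun `[0, l] rhoh) (mwh : measurable_fun `[0, l] wh).
Hypothesis ha : forall x, x \in `[0, l] -> a_lo <= a x <= a_hi.
Hypothesis hz : forall x, x \in `[0, l] -> `|g * z x| <= g_hi * z_hi.
Hypotheses (he : 0 <= eps <= eps_hi) (hg : gam_lo <= gam <= gam_hi).
Hypothesis hb : forall x, x \in `[0, l] ->
  [/\ rho_lo <= rho x <= rho_hi, rho_lo <= rhoh x <= rho_hi,
      - w_hi <= w x <= w_hi & - w_hi <= wh x <= w_hi].

Let D : set R := [set` `[0, l]].
Let mD : measurable D. Proof. exact: measurable_itv. Qed.
Let finD : (lebesgue_measure D < +oo)%E.
Proof. by rewrite /D lebesgue_measure_itv /= lte_fin l0 -EFinB ltry. Qed.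

Let dP s : rho_lo <= s <= rho_hi -> derivable P s 1.
Proof. by case/andP => los _; apply: (@smP 0%N); rewrite (lt_le_trans lo0). Qed.

Let dP1 s : rho_lo <= s <= rho_hi -> derivable (derive1 P) s 1.
Proof. by case/andP => los _; apply: (@smP 1%N); rewrite (lt_le_trans lo0). Qed.

Let brho : bounded_measurable D rho.
Proof. by apply: (bounded_measurable_itv (lo := rho_lo) (hi := rho_hi) mr) => x /hb[]. Qed.
Let brhoh : bounded_measurable D rhoh.
Proof. by apply: (bounded_measurable_itv (lo := rho_lo) (hi := rho_hi) mrh) => x /hb[]. Qed.
Let bw : bounded_measurable D w.
Proof. by apply: (bounded_measurable_itv (lo := - w_hi) (hi := w_hi) mw) => x /hb[]. Qed.
Let bwh : bounded_measurable D wh.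
Proof. by apply: (bounded_measurable_itv (lo := - w_hi) (hi := w_hi) mwh) => x /hb[]. Qed.
Let ba : bounded_measurable D a.
Proof. by apply: (bounded_measurable_itv (lo := a_lo) (hi := a_hi) ma) => x /ha. Qed.
Let bgz : bounded_measurable D (fun x => g * z x).
Proof. by split; [apply: measurable_funM | exists (g_hi * z_hi) => x /hz]. Qed.

Let cP : {within `[rho_lo, rho_hi], continuous P}.
Proof. by apply: derivable_within_continuous => s; rewrite in_itv /=; exact: dP. Qed.

Let cP1 : {within `[rho_lo, rho_hi], continuous (derive1 P)}.
Proof. by apply: derivable_within_continuous => s; rewrite in_itv /=; exact: dP1. Qed.

Let bP : bounded_measurable D (fun x => P (rho x)).
Proof. by apply: (bounded_measurable_comp_itv lohi cP mr) => x /hb[]. Qed.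
Let bPh : bounded_measurable D (fun x => P (rhoh x)).
Proof. by apply: (bounded_measurable_comp_itv lohi cP mrh) => x /hb[]. Qed.
Let bP1h : bounded_measurable D (fun x => derive1 P (rhoh x)).
Proof. by apply: (bounded_measurable_comp_itv lohi cP1 mrh) => x /hb[]. Qed.

#[local] Hint Resolve mD finD brho brhoh bw bwh ba bgz bP bPh bP1h : core.

Lemma Hrel_int0l : Hrel l a g z P eps rho w rhoh wh =
  int0l l (fun x => a x * rel_energy_density P eps (rho x) (w x) (rhoh x) (wh x)).
Proof.
rewrite /Hrel /Henergy /int0l -!RintegralB; try by auto 10.
by apply: eq_Rintegral => x _; rewrite /rel_energy_density /energy_density; ring.
Qed.

Lemma friction_int0l_le :
  - int0l l (fun x => gam * (`|w x| * w x - `|wh x| * wh x) * a x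
                      * (rho x * w x - rhoh x * wh x))
  <= friction_constant rho_lo rho_hi w_hi (eps_hi ^+ 2 * w_hi ^+ 2) gam_hi
       * Hrel l a g z P eps rho w rhoh wh - 2 * Drel l a gam rho w rhoh wh.
Proof.
rewrite Hrel_int0l /Drel /int0l -RintegralN; try by auto 10.
rewrite [2 * (16^-1 * _)]mulrA; apply: le_Rintegral_lincomb;
  try by rewrite ?/rel_energy_density ?/energy_density; auto 10.
move=> x Dx; have [hr hrh hw hwh] := hb Dx.
apply: friction_le_rel_energy_dissipation => //.
- by rewrite mulr_gt0 ?exprn_gt0.
- by move=> s /hP2; rewrite mulrA.
- apply: ler_wpM2r; first exact: sqr_ge0.
  by case/andP: he => e0 eeb; rewrite ler_sqr ?nnegrE // (le_trans e0).
- by case/andP: hg => glo ghi; rewrite ghi (le_trans (ltW glo0)).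
- by case/andP: (ha Dx) => alo _; rewrite (le_trans (ltW alo0)).
Qed.

End integrated_estimate.

Theorem lemma4p2 (R : realType)
  (rho_lo rho_hi w_hi eps_hi a_lo a_hi g_hi z_hi gam_lo gam_hi : R) :
  0 < rho_lo -> rho_lo <= rho_hi -> 0 < w_hi -> 0 < eps_hi ->
  0 < a_lo -> a_lo <= a_hi -> 0 < g_hi -> 0 < z_hi ->
  0 < gam_lo -> gam_lo <= gam_hi ->
  exists C1 : R, 0 < C1 /\
  forall (l : R) (a : R -> R) (g : R) (z : R -> R) (P : R -> R),
    0 < l ->
    smooth_pos P -> strictly_convex_pos P ->
    (* (A1) *)
    (forall r, rho_lo <= r <= rho_hi ->
       4 * eps_hi ^+ 2 * w_hi ^+ 2 <= r * derive1 (derive1 P) r) ->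
    measurable_fun `[0, l] a ->
    (forall x, x \in `[0, l] -> a_lo <= a x <= a_hi) ->
    measurable_fun `[0, l] z ->
    (forall x, x \in `[0, l] -> `|g * z x| <= g_hi * z_hi) ->
    forall (eps gam : R) (rho w rhoh wh : R -> R),
    (* (A2) *)
    0 <= eps <= eps_hi -> gam_lo <= gam <= gam_hi ->
    measurable_fun `[0, l] rho -> measurable_fun `[0, l] w ->
    measurable_fun `[0, l] rhoh -> measurable_fun `[0, l] wh ->
    (forall x, x \in `[0, l] ->
       [/\ rho_lo <= rho x <= rho_hi, rho_lo <= rhoh x <= rho_hi,
           - w_hi <= w x <= w_hi & - w_hi <= wh x <= w_hi]) ->
    - int0l l (fun x => gam * (`|w x| * w x - `|wh x| * wh x) * a x
                        * (rho x * w x - rhoh x * wh x))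
    <= C1 * Hrel l a g z P eps rho w rhoh wh
       - 2 * Drel l a gam rho w rhoh wh.
Proof.
move=> lo0 lohi wb0 eb0 alo0 alohi gh0 zh0 glo0 glohi.
exists (friction_constant rho_lo rho_hi w_hi (eps_hi ^+ 2 * w_hi ^+ 2) gam_hi); split.
  apply: friction_constant_gt0 => //.
  - exact: lt_le_trans lohi.
  - exact: ltW.
  - by rewrite mulr_gt0 ?exprn_gt0.
  - exact: ltW (lt_le_trans glo0 glohi).
move=> l a g z P l0 sm _ hP2 ma ha mz hz eps gam rho w rhoh wh he hg mr mw mrh mwh hb.
exact: (friction_int0l_le lo0 lohi wb0 eb0 alo0 glo0 l0 sm hP2 ma mz mr mw mrh mwh ha hz he hg hb).
Qed.
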